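(* Let $H$ be a graph labeled by $\mathrm{HL}$-types and let $p\in Pr$ be a primitive type such that $p$ is lonely in $\times(H)$ and $\times(H)$ has no skeleton subtypes. Then $\mathrm{HL}\not\vdash H\to p$.
   Context: Hypergraphs: given labels $C$ with $type:C\to\mathbb{N}$, a graph is $G=\langle V,E,att,lab,ext\rangle$ with finite $V,E$, $att:E\to V^\circledast$ (strings of distinct nodes), $lab:E\to C$ with $type(lab(e))=|att(e)|$, $ext\in V^\circledast$; $type(G)=|ext|$; isomorphic graphs identified. Handle $a^\bullet$: one edge labeled $a$ attached to $v_1\dots v_n$, all external in that order. Replacement $G[e/H]$: remove $e$, insert a disjoint copy of $H$, fuse $i$-th external node of $H$ with $i$-th attachment node of $e$; simultaneous replacement; relabeling $G[e:=a]$. $\mathrm{HL}$: primitive types $Pr$ with $type:Pr\to\mathbb{N}$ (infinitely many of each arity); symbol $\$$ of any arity. Types: primitives; $N\div D$ where $D$ has exactly one edge $d_0$ labeled $\$$, others labeled by types, $type(N)=type(D)$, $type(N\div D)=type_D(d_0)$; $\times(M)$ for a type-labeled graph $M$, $type(\times(M))=type(M)$. Subtypes of a type are the occurrences of types in its inductive construction (the type itself, and recursively the subtypes of $N$ and of the edge labels of $D$ for $N\div D$, and of the edge labels of $M$ for $\times(M)$). Graph sequent $H\to A$ with $type(H)=type(A)$. Axioms $p^\bullet\to p$. Rules: $(\div\to)$: for $N\div D$ with $E_D=\{d_0,\dots,d_k\}$, $e\in E_H$ labeled $N$: from $H\to A$, $H_i\to lab(d_i)$ infer $H[e/D][d_0:=N\div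 D][d_1/H_1,\dots,d_k/H_k]\to A$; $(\to\div)$: from $D[d_0/F]\to N$ infer $F\to N\div D$; $(\times\to)$: if $e\in E_G$ is labeled $\times(F)$, from $G[e/F]\to A$ infer $G\to A$; $(\to\times)$: with $E_M=\{m_1,\dots,m_l\}$, from $H_i\to lab(m_i)$ infer $M[m_1/H_1,\dots,m_l/H_l]\to\times(M)$. Top occurrence: a distinguished subtype occurrence $B$ is a top occurrence within $A$ if $A=B$; or $A=\times(M)$ and $B$ is a top occurrence within $lab(e_0)$ for some $e_0\in E_M$; or $A=N\div D$ and $B$ is a top occurrence within $N$. A primitive type $p$ is lonely in a type $A$ if for each top occurrence of $p$ within $A$ there is a subtype $\times(M)$ of $A$ with $|E_M|\ge 2$ and some $e_0\in E_M$ whose label $lab(e_0)=p$ is that top occurrence. A type $A$ is skeleton if $A=\times(M)$ with $E_M=\emptyset$ and $|ext_M|=|V_M|$. *)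

From mathcomp Require Import all_boot.
From Stdlib Require List.

Set Implicit Arguments.
Unset Strict Implicit.
Unset Printing Implicit Defensive.

(* Hypergraphs.  A graph has a finite list of (distinct) nodes [gV], a list  *)
(* of edges [gE] (edge i = i-th entry, a pair (label, attachment string)),   *)
(* and a string of external nodes [gext].  Graphs are identified up to       *)
(* isomorphism via [iso_data] / [giso] below.                                *)
Record hgraph (L : Type) := HGraph {
  gV : seq nat;
  gE : seq (L * seq nat);
  gext : seq nat }.
Arguments HGraph {L}.

(* HL types.
   - [Prim n i] : the i-th primitive type of arity n (infinitely many per arity).
   - [Div N d0 D] : N ÷ D, where the graph D has the distinguished $-edge d0
     with attachment string [d0], plus the type-labelled edges [gE D];
     nodes [gV D] and external nodes [gext D].
   - [Prod M] : ×(M). *)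
Inductive typ : Type :=
| Prim (n i : nat)
| Div (N : typ) (d0 : seq nat) (D : hgraph typ)
| Prod (M : hgraph typ).

Definition tarity (A : typ) : nat :=
  match A with
  | Prim n _ => n
  | Div _ d0 _ => size d0
  | Prod M => size (gext M)
  end.

Definition dflt_edge : typ * seq nat := (Prim 0 0, [::]).
Definition lab (G : hgraph typ) (i : nat) : typ := (nth dflt_edge (gE G) i).1.
Definition att (G : hgraph typ) (i : nat) : seq nat := (nth dflt_edge (gE G) i).2.

Inductive wf_typ : typ -> Prop :=
| wf_prim n i : wf_typ (Prim n i)
| wf_div N d0 D :
    wf_typ N ->
    uniq (gV D) -> uniq (gext D) -> {subset gext D <= gV D} ->
    uniq d0 -> {subset d0 <= gV D} ->
    (forall e, List.In e (gE D) ->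
       [/\ uniq e.2, {subset e.2 <= gV D} & tarity e.1 = size e.2]) ->
    (forall e, List.In e (gE D) -> wf_typ e.1) ->
    tarity N = size (gext D) ->
    wf_typ (Div N d0 D)
| wf_prod M :
    uniq (gV M) -> uniq (gext M) -> {subset gext M <= gV M} ->
    (forall e, List.In e (gE M) ->
       [/\ uniq e.2, {subset e.2 <= gV M} & tarity e.1 = size e.2]) ->
    (forall e, List.In e (gE M) -> wf_typ e.1) ->
    wf_typ (Prod M).

Definition wf_graph (G : hgraph typ) : Prop :=
  [/\ uniq (gV G), uniq (gext G), {subset gext G <= gV G},
      (forall e, List.In e (gE G) ->
         [/\ uniq e.2, {subset e.2 <= gV G} & tarity e.1 = size e.2])
    & (forall e, List.In e (gE G) -> wf_typ e.1)].

Definition wf_seq (G : hgraph typ) (A : typ) : Prop :=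
  [/\ wf_graph G, wf_typ A & size (gext G) = tarity A].

(* Isomorphism data (without labels): node bijection f, edge bijection s
   (edge i of G corresponds to edge (nth 0 s i) of G'). *)
Definition iso_data (f : nat -> nat) (s : seq nat) (G G' : hgraph typ) : Prop :=
  [/\ [/\ {in gV G &, injective f},
          perm_eq (map f (gV G)) (gV G')
        & map f (gext G) = gext G'],
      perm_eq s (iota 0 (size (gE G'))),
      size s = size (gE G)
    & forall i, i < size (gE G) -> att G' (nth 0 s i) = map f (att G i)].

Inductive teq : typ -> typ -> Prop :=
| teq_prim n i : teq (Prim n i) (Prim n i)
| teq_div N N' d0 d0' D D' f s :
    teq N N' -> iso_data f s D D' -> map f d0 = d0' ->
    (forall i, i < size (gE D) -> teq (lab D i) (lab D' (nth 0 s i))) ->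
    teq (Div N d0 D) (Div N' d0' D')
| teq_prod M M' f s :
    iso_data f s M M' ->
    (forall i, i < size (gE M) -> teq (lab M i) (lab M' (nth 0 s i))) ->
    teq (Prod M) (Prod M').

Definition giso (G G' : hgraph typ) : Prop :=
  exists f s, iso_data f s G G' /\
    forall i, i < size (gE G) -> teq (lab G i) (lab G' (nth 0 s i)).

Definition handle (a : typ) : hgraph typ :=
  HGraph (iota 0 (tarity a)) [:: (a, iota 0 (tarity a))] (iota 0 (tarity a)).

(* Simultaneous replacement G[e_1/H_1, ..., e_k/H_k]:
   [Hs] gives, for each edge index i of G, [Some H] (replace edge i by H) or
   [None] (keep edge i).  Internal nodes of the H replacing edge i are renamed
   apart by v |-> (i+1)*B + v; the j-th external node of H is fused with the
   j-th attachment node of edge i.  The edges replacing edge i are placed, in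
   order, at the position of edge i. *)
Definition repl_bound (G : hgraph typ) (Hs : seq (option (hgraph typ))) : nat :=
  (foldr maxn 0 (gV G ++ gext G ++ flatten [seq match o with
                                   | Some H => gV H ++ gext H ++ flatten (map snd (gE H))
                                   | None => [::] end | o <- Hs]
                 ++ flatten (map snd (gE G)))).+1.

Definition repl_node (B i : nat) (a : seq nat) (H : hgraph typ) (v : nat) : nat :=
  if v \in gext H then nth 0 a (index v (gext H)) else i.+1 * B + v.

Definition repl (G : hgraph typ) (Hs : seq (option (hgraph typ))) : hgraph typ :=
  let B := repl_bound G Hs in
  HGraph
    (gV G ++ flatten [seq match nth None Hs i with
                          | Some H => [seq i.+1 * B + v | v <- gV H & v \notin gext H]
                          | None => [::] end
                     | i <- iota 0 (size (gE G))])
    (flatten [seq match nth None Hs i with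
                  | Some H => [seq (e.1, map (repl_node B i (att G i) H) e.2) | e <- gE H]
                  | None => [:: nth dflt_edge (gE G) i] end
             | i <- iota 0 (size (gE G))])
    (gext G).

Definition repl1 (G : hgraph typ) (e : nat) (H : hgraph typ) : hgraph typ :=
  repl G (nseq e None ++ [:: Some H]).

(* The graph D of N ÷ D with its $-edge d0 (edge index 0) labelled by X. *)
Definition dgraph (X : typ) (d0 : seq nat) (D : hgraph typ) : hgraph typ :=
  HGraph (gV D) ((X, d0) :: gE D) (gext D).

Inductive derivable : hgraph typ -> typ -> Prop :=
| d_ax n i :
    derivable (handle (Prim n i)) (Prim n i)
| d_iso H A H' A' :
    derivable H A -> giso H H' -> teq A A' -> wf_seq H' A' ->
    derivable H' A'
| d_divL N d0 D H A e Hs :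
    (* (÷ →): E_D = {d0, d_1..d_k}; d0 is edge 0 of [dgraph], d_j is edge j-1 of D *)
    wf_typ (Div N d0 D) ->
    e < size (gE H) -> lab H e = N ->
    size Hs = size (gE D) ->
    derivable H A ->
    (forall j, j < size (gE D) -> derivable (nth (handle (Prim 0 0)) Hs j) (lab D j)) ->
    wf_seq (repl (repl1 H e (dgraph (Div N d0 D) d0 D))
                 (nseq e.+1 None ++ map Some Hs)) A ->
    derivable (repl (repl1 H e (dgraph (Div N d0 D) d0 D))
                    (nseq e.+1 None ++ map Some Hs)) A
| d_divR N d0 D F :
    derivable (repl1 (dgraph (Prim 0 0) d0 D) 0 F) N ->
    wf_seq F (Div N d0 D) ->
    derivable F (Div N d0 D)
| d_prodL G e F A :
    e < size (gE G) -> lab G e = Prod F ->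
    derivable (repl1 G e F) A ->
    wf_seq G A ->
    derivable G A
| d_prodR M Hs :
    size Hs = size (gE M) ->
    (forall j, j < size (gE M) -> derivable (nth (handle (Prim 0 0)) Hs j) (lab M j)) ->
    wf_seq (repl M (map Some Hs)) (Prod M) ->
    derivable (repl M (map Some Hs)) (Prod M).

(* Subtype occurrences, addressed by paths from the root.
   Children of N ÷ D: 0 = N, j+1 = label of edge j of D (the non-$ edges);
   children of ×(M): j = label of edge j of M. *)
Fixpoint subt (A : typ) (p : seq nat) : option typ :=
  match p with
  | [::] => Some A
  | j :: p' =>
      match A with
      | Prim _ _ => None
      | Div N _ D =>
          match j with
          | 0 => subt N p'
          | j'.+1 => match List.nth_error (gE D) j' with
                     | Some e => subt e.1 p'
                     | None => None end
          end
      | Prod M => match List.nth_error (gE M) j with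
                  | Some e => subt e.1 p'
                  | None => None end
      end
  end.

Fixpoint is_top (A : typ) (p : seq nat) : Prop :=
  match p with
  | [::] => True
  | j :: p' =>
      match A with
      | Prim _ _ => False
      | Div N _ _ => j = 0 /\ is_top N p'
      | Prod M => match List.nth_error (gE M) j with
                  | Some e => is_top e.1 p'
                  | None => False end
      end
  end.

Definition lonely (p A : typ) : Prop :=
  forall q, is_top A q -> subt A q = Some p ->
    exists q' j M, q = q' ++ [:: j] /\ subt A q' = Some (Prod M) /\
                   2 <= size (gE M) /\ j < size (gE M).

Definition skeleton (A : typ) : Prop :=
  exists M, A = Prod M /\ gE M = [::] /\ size (gext M) = size (gV M).

Definition no_skeleton_subtypes (A : typ) : Prop :=
  forall q B, subt A q = Some B -> ~ skeleton B.

(* By induction on derivations, if G -> p is derivable with p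
   primitive then G is obstructed: either G is a single p-edge attached to all
   of its nodes, or some edge label of G is defective, i.e. descending from it
   through numerators of divisions and edge labels of products one reaches a
   skeleton or an occurrence of p that is not an edge of a product with at least
   two edges.  Right rules never conclude p and the axiom is a single p-edge.
   (÷ →) turns the label N of edge e into N ÷ D and keeps the other labels.
   (× →) passes obstruction from G[e/F] back to G: a defective label of F, or a
   single p-edge coming from F, makes ×(F) defective; a single p-edge of G that
   covers all nodes of G[e/F] leaves F without edges and internal nodes, so ×(F)
   is a skeleton.  An obstructed H makes ×(H) defective, which is impossible
   when p is lonely in ×(H) and ×(H) has no skeleton subtypes. *)

From mathcomp Require Import all_boot zify.
From Stdlib Require List.

Set Implicit Arguments.
Unset Strict Implicit.
Unset Printing Implicit Defensive.

Section ListIn.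

Variable T : Type.
Implicit Types (s : seq T) (x : T).

Lemma nth_errorE s k : List.nth_error s k = onth s k.
Proof. by elim: k s => [|k IH] [|y s] //=. Qed.

Lemma In_nthP x0 s x : List.In x s <-> exists2 k, k < size s & nth x0 s k = x.
Proof.
split=> [Hx|[k lt_ks <-]].
  have [k] := List.In_nth_error s x Hx; rewrite nth_errorE => Ek.
  by exists k; [rewrite -onthTE Ek | exact: onth_nth].
apply: (@List.nth_error_In _ _ k).
by rewrite nth_errorE onthE (nth_map x0 None Some lt_ks).
Qed.

Lemma mem_nth_In x0 s k : k < size s -> List.In (nth x0 s k) s.
Proof. by move=> lt_ks; apply/(In_nthP x0); exists k. Qed.

Lemma In_take s e x : List.In x (take e s) -> List.In x s.
Proof. by rewrite -{2}(cat_take_drop e s) => Hx; apply: List.in_or_app; left. Qed.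

Lemma In_drop s e x : List.In x (drop e s) -> List.In x s.
Proof. by rewrite -{2}(cat_take_drop e s) => Hx; apply: List.in_or_app; right. Qed.

Lemma cat_take_nth_drop x0 s e :
  e < size s -> s = take e s ++ nth x0 s e :: drop e.+1 s.
Proof. by move=> lt_es; rewrite -drop_nth ?cat_take_drop. Qed.

End ListIn.

Lemma InP (T : eqType) (s : seq T) x : List.In x s <-> x \in s.
Proof. by rewrite (In_nthP x); split=> /(nthP x). Qed.

Lemma teq_Prim_l n i A : teq (Prim n i) A -> A = Prim n i.
Proof. by move=> Ht; inversion Ht. Qed.

Lemma teq_Prim_r n i A : teq A (Prim n i) -> A = Prim n i.
Proof. by move=> Ht; inversion Ht. Qed.

Section IsoData.

Variables (f : nat -> nat) (s : seq nat) (M M' : hgraph typ).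
Hypothesis iso : iso_data f s M M'.

Lemma iso_data_size_edges : size (gE M') = size (gE M).
Proof. by case: iso => _ /perm_size; rewrite size_iota => <- ->. Qed.

Lemma iso_data_index k : k < size (gE M) -> nth 0 s k < size (gE M').
Proof.
case: iso => _ perm_s size_s _ lt_k.
have := @mem_nth _ 0 s k; rewrite size_s => /(_ lt_k).
by rewrite (perm_mem perm_s) mem_iota.
Qed.

Lemma iso_data_index0 : size (gE M) = 1 -> nth 0 s 0 = 0.
Proof.
move=> size1; have := iso_data_index (k := 0).
by rewrite iso_data_size_edges size1 => /(_ isT); case: nth.
Qed.

Lemma iso_data_size_nodes : size (gV M') = size (gV M).
Proof. by case: iso => [[_ /perm_size <- _] _ _ _]; rewrite size_map. Qed.

Lemma iso_data_size_ext : size (gext M') = size (gext M).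
Proof. by case: iso => [[_ _ <-] _ _ _]; rewrite size_map. Qed.

End IsoData.

Inductive defective (p : typ) : typ -> Prop :=
| defective_skeleton M :
    gE M = [::] -> size (gext M) = size (gV M) -> defective p (Prod M)
| defective_num d0 D : defective p (Div p d0 D)
| defective_edge M a : gE M = [:: (p, a)] -> defective p (Prod M)
| defective_div N d0 D : defective p N -> defective p (Div N d0 D)
| defective_prod M x :
    List.In x (gE M) -> defective p x.1 -> defective p (Prod M).

Lemma defective_teq n i A A' :
  teq A A' -> defective (Prim n i) A -> defective (Prim n i) A'.
Proof.
elim=> {A A'} [//|N N' d0 d0' D D' f s HN IHN _ _ _ _|M M' f s iso Hlab IHlab].
  move=> Hd; inversion Hd; subst; last exact/defective_div/IHN.
  by rewrite (teq_Prim_l HN); apply: defective_num.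
have size_E := iso_data_size_edges iso.
move=> Hd; inversion Hd as [M0 E0 Hsz| |M0 a Ea| |M0 x Hx Hdx]; subst.
- apply: defective_skeleton.
    by apply/size0nil; rewrite size_E E0.
  by rewrite (iso_data_size_ext iso) (iso_data_size_nodes iso).
- have s0 : nth 0 s 0 = 0 by apply: (iso_data_index0 iso); rewrite Ea.
  have := Hlab 0; rewrite /lab Ea s0 => /(_ isT).
  case EM': (gE M') size_E => [|[y a'] [|? ?]]; rewrite Ea //= => _ /teq_Prim_l Ey.
  by apply: (defective_edge (a := a')); rewrite EM' Ey.
- have [k lt_k Ek] := (In_nthP dflt_edge _ _).1 Hx.
  apply: (defective_prod (x := nth dflt_edge (gE M') (nth 0 s k))).
    exact/mem_nth_In/(iso_data_index iso).
  by apply: IHlab => //; rewrite /lab Ek.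
Qed.

(* Unlike [lonely], this says nothing about the root, so it is inherited by
   numerators and by edge labels of products. *)
Definition lonely_inside (p A : typ) : Prop :=
  forall q j, is_top A (q ++ [:: j]) -> subt A (q ++ [:: j]) = Some p ->
    exists M, [/\ subt A q = Some (Prod M), 2 <= size (gE M) & j < size (gE M)].

Lemma lonely_inside_of_lonely p A : lonely p A -> lonely_inside p A.
Proof.
move=> Hl q j Htop Hsub; have [q0 [j0 [M [Eq [HM [lt2 ltj]]]]]] := Hl _ Htop Hsub.
by move: Eq; rewrite !cats1 => /rcons_inj [-> ->]; exists M.
Qed.

Lemma lonely_inside_num p N d0 D :
  lonely_inside p (Div N d0 D) -> lonely_inside p N.
Proof. by move=> Hl q j Htop; apply: (Hl (0 :: q) j (conj erefl Htop)). Qed.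

Lemma lonely_inside_edge p M x :
  List.In x (gE M) -> lonely_inside p (Prod M) -> lonely_inside p x.1.
Proof.
move=> Hx Hl q j; have [k Ek] := List.In_nth_error _ _ Hx.
by have := Hl (k :: q) j; rewrite /= Ek.
Qed.

Lemma no_skeleton_subtypes_num N d0 D :
  no_skeleton_subtypes (Div N d0 D) -> no_skeleton_subtypes N.
Proof. by move=> Hns q; apply: (Hns (0 :: q)). Qed.

Lemma no_skeleton_subtypes_edge M x :
  List.In x (gE M) -> no_skeleton_subtypes (Prod M) -> no_skeleton_subtypes x.1.
Proof.
move=> Hx Hns q; have [k Ek] := List.In_nth_error _ _ Hx.
by have := Hns (k :: q); rewrite /= Ek.
Qed.

Lemma not_defective p A :
  no_skeleton_subtypes A -> lonely_inside p A -> ~ defective p A.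
Proof.
move=> + + Hd; elim: Hd => {A}.
- by move=> M E0 Hsz Hns _; apply: (Hns [::] (Prod M)) => //; exists M.
- by move=> d0 D _ /(_ [::] 0 (conj erefl I) erefl) [M []].
- move=> M a Ea _ Hl; have /= := Hl [::] 0; rewrite Ea => /(_ I erefl) [M' [[<-]]].
  by rewrite Ea.
- move=> N d0 D _ IH Hns Hl.
  exact: IH (no_skeleton_subtypes_num Hns) (lonely_inside_num Hl).
- move=> M x Hx _ IH Hns Hl.
  exact: IH (no_skeleton_subtypes_edge Hx Hns) (lonely_inside_edge Hx Hl).
Qed.

Definition near_handle (p : typ) (G : hgraph typ) : Prop :=
  exists2 a, gE G = [:: (p, a)] & {subset gV G <= a}.

Definition obstructed (p : typ) (G : hgraph typ) : Prop :=
  (exists2 x, List.In x (gE G) & defective p x.1) \/ near_handle p G.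

Lemma obstructed_defective p G : obstructed p G -> defective p (Prod G).
Proof.
by case=> [[x Hx Hd] | [a Ea _]];
  [apply: defective_prod Hd | apply: defective_edge Ea].
Qed.

Lemma obstructed_handle n i : obstructed (Prim n i) (handle (Prim n i)).
Proof. by right; exists (iota 0 n). Qed.

Lemma obstructed_giso n i G G' :
  giso G G' -> obstructed (Prim n i) G -> obstructed (Prim n i) G'.
Proof.
move=> [f [s [iso Hlab]]]; have size_E := iso_data_size_edges iso.
case=> [[x Hx Hd] | [a Ea Ha]].
  have [k lt_k Ek] := (In_nthP dflt_edge _ _).1 Hx.
  left; exists (nth dflt_edge (gE G') (nth 0 s k)).
    exact/mem_nth_In/(iso_data_index iso).
  by apply: defective_teq (Hlab k lt_k) _; rewrite /lab Ek.
have s0 : nth 0 s 0 = 0 by apply: (iso_data_index0 iso); rewrite Ea.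
right; case EG': (gE G') size_E => [|[y a'] [|? ?]]; rewrite Ea //= => _.
have := Hlab 0; rewrite /lab Ea s0 EG' => /(_ isT) /teq_Prim_l /= Ey.
exists a'; first by rewrite EG' Ey.
move=> v; case: iso => [[_ perm_V _] _ _ /(_ 0)].
rewrite /att s0 EG' Ea /= => /(_ isT) ->.
by rewrite -(perm_mem perm_V) => /mapP [u /Ha u_a ->]; apply: map_f.
Qed.

Definition repl_block (G : hgraph typ) (Hs : seq (option (hgraph typ))) (i : nat) :=
  if nth None Hs i is Some H then
    [seq (x.1, map (repl_node (repl_bound G Hs) i (att G i) H) x.2) | x <- gE H]
  else [:: nth dflt_edge (gE G) i].

Lemma gE_repl_segment G m Xs : m + size Xs <= size (gE G) ->
  gE (repl G (nseq m None ++ map Some Xs)) =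
  take m (gE G)
  ++ flatten [seq repl_block G (nseq m None ++ map Some Xs) i | i <- iota m (size Xs)]
  ++ drop (m + size Xs) (gE G).
Proof.
set Hs := nseq m None ++ _ => le_mXs.
have kept k : nth None Hs k = None -> repl_block G Hs k = [:: nth dflt_edge (gE G) k].
  by rewrite /repl_block => ->.
have -> : gE (repl G Hs) =
  flatten [seq repl_block G Hs i | i <- iota 0 (size (gE G))] by [].
rewrite -(subnKC le_mXs) iotaD iotaD !map_cat !flatten_cat !add0n.
rewrite -catA; congr (_ ++ (_ ++ _)).
  rewrite -(map_nth_iota0 dflt_edge) ?(leq_trans (leq_addr _ _) le_mXs) //.
  rewrite -[RHS]flatten_map1.
  congr flatten; apply/eq_in_map => k; rewrite mem_iota => /andP [_ lt_km].
  by apply: kept; rewrite nth_cat size_nseq lt_km nth_nseq lt_km.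
rewrite -[drop _ _]take_size -(map_nth_iota dflt_edge) size_drop //.
rewrite -[RHS]flatten_map1.
congr flatten; apply/eq_in_map => k; rewrite mem_iota => /andP [le_k _].
by apply: kept; rewrite nth_default // size_cat size_nseq size_map.
Qed.

Lemma gE_repl1 G e F : e < size (gE G) ->
  exists2 blk, gE (repl1 G e F) = take e (gE G) ++ blk ++ drop e.+1 (gE G)
             & map fst blk = map fst (gE F).
Proof.
move=> lt_e; exists (repl_block G (nseq e None ++ [:: Some F]) e).
  by rewrite /repl1 (gE_repl_segment (Xs := [:: F])) ?addn1 //= cats0.
by rewrite /repl_block nth_cat size_nseq ltnn subnn /= -map_comp.
Qed.

Lemma gE_divL H e N d0 D Hs : e < size (gE H) -> size Hs = size (gE D) ->
  exists a mid,
    gE (repl (repl1 H e (dgraph (Div N d0 D) d0 D)) (nseq e.+1 None ++ map Some Hs))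
    = take e (gE H) ++ (Div N d0 D, a) :: mid ++ drop e.+1 (gE H).
Proof.
move=> lt_e size_Hs; set G1 := repl1 H e _.
have [blk E1 Eblk] := gE_repl1 (dgraph (Div N d0 D) d0 D) lt_e.
case: blk Eblk E1 => [//|[A a] blk] [-> Eblk] E1.
have size_blk : size blk = size Hs by rewrite size_Hs -(size_map fst) Eblk size_map.
have size_take_e : size (take e (gE H)) = e by rewrite size_take lt_e.
exists a; rewrite gE_repl_segment; last first.
  by rewrite E1 !size_cat size_take_e /= size_blk size_drop; lia.
eexists; rewrite E1 take_cat drop_cat size_take_e !ifN; try lia.
rewrite subSnn (_ : e.+1 + size Hs - e = (size Hs).+1); last by lia.
by rewrite -catA /= take0 (drop_size_cat _ size_blk).
Qed.

Lemma obstructed_divL p H e N d0 D Hs :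
  e < size (gE H) -> lab H e = N -> size Hs = size (gE D) -> obstructed p H ->
  obstructed p (repl (repl1 H e (dgraph (Div N d0 D) d0 D))
                     (nseq e.+1 None ++ map Some Hs)).
Proof.
move=> lt_e HeN size_Hs Hobs; have [a [mid E]] := gE_divL N d0 lt_e size_Hs.
left; rewrite E; have div_edge : List.In (Div N d0 D, a)
  (take e (gE H) ++ (Div N d0 D, a) :: mid ++ drop e.+1 (gE H)).
  by apply: List.in_or_app; right; left.
case: Hobs => [[x Hx Hd] | [a0 Ea _]]; last first.
  exists (Div N d0 D, a) => //=; move: HeN lt_e; rewrite /lab Ea.
  by case: e {E div_edge} => //= <- _; apply: defective_num.
rewrite (cat_take_nth_drop dflt_edge lt_e) in Hx.
case/List.in_app_iff: Hx => [Hx | [Ex | Hx]].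
- by exists x => //; apply: List.in_or_app; left.
- by exists (Div N d0 D, a) => //; apply: defective_div; rewrite -HeN /lab Ex.
- exists x => //; apply: List.in_or_app; right; right.
  by apply: List.in_or_app; right.
Qed.

Lemma leq_foldr_maxn (s : seq nat) v : v \in s -> v <= foldr maxn 0 s.
Proof.
elim: s => //= w s IH; rewrite in_cons leq_max => /predU1P [->|/IH ->];
  by rewrite ?leqnn ?orbT.
Qed.

Lemma repl_bound_att G Hs x v : List.In x (gE G) -> v \in x.2 -> v < repl_bound G Hs.
Proof.
move=> Hx v_x; rewrite /repl_bound ltnS; apply: leq_foldr_maxn.
rewrite !mem_cat; apply/orP; right; apply/orP; right; apply/orP; right.
by apply/flattenP; exists x.2 => //; apply/InP/List.in_map.
Qed.

Lemma repl1_internal_node G e F v :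
  e < size (gE G) -> v \in gV F -> v \notin gext F ->
  e.+1 * repl_bound G (nseq e None ++ [:: Some F]) + v \in gV (repl1 G e F).
Proof.
move=> lt_e v_F v_int; rewrite mem_cat; apply/orP; right.
apply/flatten_mapP; exists e; first by rewrite mem_iota.
by rewrite nth_cat size_nseq ltnn subnn /=; apply: map_f; rewrite mem_filter v_int.
Qed.

Lemma near_handle_repl1 p G e F :
  wf_typ (Prod F) -> e < size (gE G) -> near_handle p (repl1 G e F) ->
  defective p (Prod F).
Proof.
move=> wfF lt_e [a Ea Hnodes]; have [blk E Eblk] := gE_repl1 F lt_e.
rewrite E in Ea; case EF: (gE F) Eblk => [|y ys] Eblk.
  have blk0 : blk = [::] by apply/size0nil; rewrite -(size_map fst) Eblk.
  have a_G : List.In (p, a) (gE G).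
    have : List.In (p, a) (take e (gE G) ++ drop e.+1 (gE G)).
      by rewrite -[_ ++ _]/(_ ++ [::] ++ _) -blk0 Ea; left.
    by case/List.in_app_iff; [apply: In_take | apply: In_drop].
  inversion wfF as [| |M uniqV uniqX sub_XV].
  apply: defective_skeleton => //; apply/perm_size/uniq_perm => // v.
  apply/idP/idP => [/sub_XV // | v_F]; apply/negPn/negP => v_int.
  (* internal nodes of F are renamed above every node of G *)
  have := Hnodes _ (repl1_internal_node lt_e v_F v_int).
  move/(repl_bound_att (nseq e None ++ [:: Some F]) a_G).
  by rewrite mulSn -addnA ltnNge leq_addr.
case: blk {E} Eblk Ea => [//|b bs] [Eb Ebs].
case: (take e (gE G)) => [|t [|t' ts]] //= [Eb' Ebs'].
case: bs Ebs Ebs' => [|//]; case: ys EF => [EF _ _ | //].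
apply: (defective_edge (a := y.2)); rewrite EF.
by case: y {EF} Eb => y a' /= Eb; rewrite -Eb Eb'.
Qed.

Lemma obstructed_prodL p G e F :
  wf_graph G -> e < size (gE G) -> lab G e = Prod F ->
  obstructed p (repl1 G e F) -> obstructed p G.
Proof.
move=> wfG lt_e HeF Hobs; have e_G := mem_nth_In dflt_edge lt_e.
suff [HdF | [x Hx Hd]] :
    defective p (Prod F) \/ exists2 x, List.In x (gE G) & defective p x.1.
- by left; exists (nth dflt_edge (gE G) e) => //; rewrite -/(lab G e) HeF.
- by left; exists x.
case: Hobs => [[x Hx Hd] | Hnh]; last first.
  left; apply: near_handle_repl1 Hnh => //.
  by case: wfG => _ _ _ _ /(_ _ e_G); rewrite -/(lab G e) HeF.
have [blk E Eblk] := gE_repl1 F lt_e; rewrite E in Hx.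
case/List.in_app_iff: Hx => [Hx | /List.in_app_iff [Hx | Hx]].
- by right; exists x => //; apply: In_take Hx.
- have : List.In x.1 (map fst (gE F)) by rewrite -Eblk; apply: List.in_map.
  by case/List.in_map_iff => y [Ey Hy]; left; apply: defective_prod Hy _; rewrite Ey.
- by right; exists x => //; apply: In_drop Hx.
Qed.

Lemma derivable_obstructed G n i :
  derivable G (Prim n i) -> obstructed (Prim n i) G.
Proof.
move Ep: (Prim n i) => p Hd; elim: Hd Ep => {G p}.
- by move=> n' i' <-; apply: obstructed_handle.
- move=> H A H' A' _ IH isoH HA _ EA'; subst A'.
  by rewrite (teq_Prim_r HA) in IH; apply: obstructed_giso isoH (IH erefl).
- move=> N d0 D H A e Hs _ lt_e HeN size_Hs _ IH _ _ _ EA.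
  exact: obstructed_divL lt_e HeN size_Hs (IH EA).
- by [].
- move=> G e F A lt_e HeF _ IH [wfG _ _] EA.
  exact: obstructed_prodL wfG lt_e HeF (IH EA).
- by [].
Qed.

Theorem lemma1 (H : hgraph typ) (n i : nat) :
  wf_graph H ->
  lonely (Prim n i) (Prod H) ->
  no_skeleton_subtypes (Prod H) ->
  ~ derivable H (Prim n i).
Proof.
move=> _ Hlonely Hns /derivable_obstructed /obstructed_defective.
exact: not_defective Hns (lonely_inside_of_lonely Hlonely).
Qed.
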